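(* Assume $p_0\in(0,1)$, $p_j\in(0,1)$ and $\tau_j=\frac{p_0}{p_0+2(1-p_0)p_j}$ for $j=1,\dots,k$. Then for every $\Theta\in\mathbb R^{nd}$, $$\mathbb E_\xi\|G(\Theta)\|^2\le 4\mathcal L\big(F(\Theta)-F(\hat\Theta)\big)+2\sigma^2_{\hat\Theta}.$$
   Context: Clients $1,\dots,n$ are partitioned into nonempty disjoint clusters $\mathcal I_1,\dots,\mathcal I_k$; $d\ge1$. Each $f_i:\mathbb R^d\to\mathbb R$ is differentiable, $\mu$-strongly convex and $L$-smooth ($0<\mu\le L$). Fix $\gamma_i>0$ and $\alpha_j\in[0,1]$, not all $\alpha_j=0$. For $\Theta=(\theta_1,\dots,\theta_n)$ let $\Theta_j$ be the stacked vector of $\theta_i$, $i\in\mathcal I_j$; define $\bar\theta_j=\frac{\sum_{i\in\mathcal I_j}\gamma_i\theta_i}{\sum_{i\in\mathcal I_j}\gamma_i}$, $\bar\theta=\frac{\sum_{j}\sum_{i\in\mathcal I_j}\alpha_j\gamma_i\theta_i}{\sum_{j}\sum_{i\in\mathcal I_j}\alpha_j\gamma_i}$, $\psi_j(\Theta_j)=\frac12\sum_{i\in\mathcal I_j}\gamma_i\|\theta_i-\bar\theta_j\|^2$, $\varphi(\Theta)=\frac12\sum_{j}\alpha_j\sum_{i\in\mathcal I_j}\gamma_i\|\theta_i-\bar\theta\|^2$, $F_j(\Theta_j)=\sum_{i\in\mathcal I_j}f_i(\theta_i)$, and $F(\Theta)=\sum_jF_j(\Theta_j)+\sum_j(1-\alpha_j)\psi_j(\Theta_j)+\varphi(\Theta)$;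 $\hat\Theta$ is its unique minimizer. Gradient oracle: $\xi=(\xi_0,\dots,\xi_k)$ independent Bernoulli with $\mathbb P(\xi_j=1)=p_j$; $G(\Theta)=(G_1,\dots,G_n)$ with, for $i\in\mathcal I_j$: $G_i=\frac{\gamma_i\alpha_j}{p_0}(\theta_i-\bar\theta)+\frac{\gamma_i\tau_j(1-\alpha_j)}{p_0}(\theta_i-\bar\theta_j)$ if $\xi_0=1$; $G_i=\frac{\gamma_i(1-\tau_j)(1-\alpha_j)}{(1-p_0)p_j}(\theta_i-\bar\theta_j)$ if $\xi_0=0,\xi_j=1$; $G_i=\frac{1}{(1-p_0)(1-p_j)}\nabla f_i(\theta_i)$ if $\xi_0=\xi_j=0$. Define $\mathcal L=\max\big\{\frac{2}{p_0}\max_{j}\max_{i\in\mathcal I_j}\alpha_j\gamma_i,\ \max_{j}\frac{2(1-\alpha_j)\max_{i\in\mathcal I_j}\gamma_i}{p_0+2(1-p_0)p_j},\ \frac{L}{1-p_0}\max_{j}\frac{1}{1-p_j}\big\}$ and $\sigma^2_{\hat\Theta}=\frac{2}{p_0}\|\nabla\varphi(\hat\Theta)\|^2+\sum_{j=1}^k\frac{2(1-\alpha_j)^2}{p_0+2(1-p_0)p_j}\|\nabla\psi_j(\hat\Theta_j)\|^2+\frac{1}{1-p_0}\sum_{j=1}^k\frac{1}{1-p_j}\|\nabla F_j(\hat\Theta_j)\|^2$. *)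

From HB Require Import structures.
From mathcomp Require Import all_boot all_order all_algebra.
From mathcomp Require Import all_classical all_reals all_analysis.
Set Implicit Arguments. Unset Strict Implicit. Unset Printing Implicit Defensive.
Import Order.TTheory GRing.Theory Num.Theory.
Import numFieldNormedType.Exports.
Local Open Scope ring_scope.

(* Clients are 'I_n, clusters are 'I_k; client i belongs to cluster c i.
   Theta in R^{nd} is an n x d matrix whose i-th row is theta_i. *)

Section Defs.
Variable R : realType.

Definition dotv d (u v : 'rV[R]_d) : R := \sum_(l < d) u 0 l * v 0 l.
Definition sqnv d (v : 'rV[R]_d) : R := \sum_(l < d) v 0 l ^+ 2.
Definition enorm d (v : 'rV[R]_d) : R := Num.sqrt (sqnv v).
Definition sqnM n d (A : 'M[R]_(n, d)) : R :=
  \sum_(i < n) \sum_(l < d) A i l ^+ 2.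

Definition gradv d (f : 'rV[R]_d -> R) (x : 'rV[R]_d) : 'rV[R]_d :=
  \row_(l < d) ('D_(delta_mx 0 l) f x : R).
Definition gradM n d (g : 'M[R]_(n, d) -> R) (X : 'M[R]_(n, d)) : 'M[R]_(n, d) :=
  \matrix_(i < n, l < d) ('D_(delta_mx i l) g X : R).

Definition strongly_convex d (mu : R) (f : 'rV[R]_d -> R) : Prop :=
  forall x y : 'rV[R]_d,
    f x + dotv (gradv f x) (y - x) + mu / 2 * sqnv (y - x) <= f y.
Definition smooth d (L : R) (f : 'rV[R]_d -> R) : Prop :=
  forall x y : 'rV[R]_d, enorm (gradv f x - gradv f y) <= L * enorm (x - y).

Variables (n k d : nat) (c : 'I_n -> 'I_k) (gamma : 'I_n -> R) (alpha : 'I_k -> R).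

Definition cmean (Th : 'M[R]_(n, d)) (j : 'I_k) : 'rV[R]_d :=
  (\sum_(i < n | c i == j) gamma i)^-1 *: \sum_(i < n | c i == j) gamma i *: row i Th.
Definition gmean (Th : 'M[R]_(n, d)) : 'rV[R]_d :=
  (\sum_(j < k) \sum_(i < n | c i == j) alpha j * gamma i)^-1 *:
    \sum_(j < k) \sum_(i < n | c i == j) (alpha j * gamma i) *: row i Th.

(* psi_j, phi, F_j, F, as functions of the full Theta
   (psi_j and F_j only depend on the rows of cluster j) *)
Definition psi (j : 'I_k) (Th : 'M[R]_(n, d)) : R :=
  2^-1 * \sum_(i < n | c i == j) gamma i * sqnv (row i Th - cmean Th j).
Definition phi (Th : 'M[R]_(n, d)) : R :=
  2^-1 * \sum_(j < k) alpha j * \sum_(i < n | c i == j) gamma i * sqnv (row i Th - gmean Th).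
Definition Fj (f : 'I_n -> 'rV[R]_d -> R) (j : 'I_k) (Th : 'M[R]_(n, d)) : R :=
  \sum_(i < n | c i == j) f i (row i Th).
Definition Fobj (f : 'I_n -> 'rV[R]_d -> R) (Th : 'M[R]_(n, d)) : R :=
  \sum_(j < k) Fj f j Th + \sum_(j < k) (1 - alpha j) * psi j Th + phi Th.

(* The random gradient oracle.  xi : {ffun 'I_k.+1 -> bool};
   xi ord0 is xi_0 and xi (lift ord0 j) is xi_j for cluster j. *)
Definition Gorac (f : 'I_n -> 'rV[R]_d -> R) (p0 : R) (p tau : 'I_k -> R)
  (xi : {ffun 'I_k.+1 -> bool}) (Th : 'M[R]_(n, d)) : 'M[R]_(n, d) :=
  let Grow (i : 'I_n) : 'rV[R]_d :=
    let j := c i in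
    if xi ord0 then
      (gamma i * alpha j / p0) *: (row i Th - gmean Th)
      + (gamma i * tau j * (1 - alpha j) / p0) *: (row i Th - cmean Th j)
    else if xi (lift ord0 j) then
      (gamma i * (1 - tau j) * (1 - alpha j) / ((1 - p0) * p j)) *: (row i Th - cmean Th j)
    else ((1 - p0) * (1 - p j))^-1 *: gradv (f i) (row i Th) in
  \matrix_(i < n, l < d) Grow i 0 l.

Definition xi_prob (p0 : R) (p : 'I_k -> R) (xi : {ffun 'I_k.+1 -> bool}) : R :=
  (if xi ord0 then p0 else 1 - p0) *
  \prod_(j < k) (if xi (lift ord0 j) then p j else 1 - p j).

Definition EsqG (f : 'I_n -> 'rV[R]_d -> R) (p0 : R) (p tau : 'I_k -> R)
  (Th : 'M[R]_(n, d)) : R :=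
  \sum_(xi : {ffun 'I_k.+1 -> bool}) xi_prob p0 p xi * sqnM (Gorac f p0 p tau xi Th).

(* the constant script-L (maxima of nonnegative quantities; 0 as neutral) *)
Definition scrL (L p0 : R) (p : 'I_k -> R) : R :=
  Num.max (2 / p0 * \big[Num.max/0]_(j < k) \big[Num.max/0]_(i < n | c i == j) (alpha j * gamma i))
  (Num.max (\big[Num.max/0]_(j < k)
              (2 * (1 - alpha j) * \big[Num.max/0]_(i < n | c i == j) gamma i
               / (p0 + 2 * (1 - p0) * p j)))
           (L / (1 - p0) * \big[Num.max/0]_(j < k) (1 - p j)^-1)).

Definition sigma2 (f : 'I_n -> 'rV[R]_d -> R) (p0 : R) (p : 'I_k -> R)
  (Thh : 'M[R]_(n, d)) : R :=
  2 / p0 * sqnM (gradM phi Thh)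
  + \sum_(j < k) (2 * (1 - alpha j) ^+ 2 / (p0 + 2 * (1 - p0) * p j))
                   * sqnM (gradM (psi j) Thh)
  + (1 - p0)^-1 * \sum_(j < k) (1 - p j)^-1 * sqnM (gradM (Fj f j) Thh).

End Defs.

(* The expectation of |G(Theta)|^2 splits client by client into a server
   part (the row of grad phi plus tau_j times the row of grad psi_j), a
   cluster part and a local-gradient part, weighted by the probabilities
   p0, (1-p0)p_j, (1-p0)(1-p_j) of the three cases of the oracle.  Writing
   every row as (value at Theta - value at Theta^) + value at Theta^ and
   using |a + b|^2 <= 2|a|^2 + 2|b|^2, the terms at Theta^ add up to
   2 sigma^2, and the choice of tau_j makes the coefficients of the
   differences come out as 2/p0 and 2/(p0 + 2(1-p0)p_j).  For the
   differences, phi and psi_j are quadratic, so F(Theta) - F(Theta^) equals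
   the Bregman divergences of the f_i plus the quadratic forms of phi and
   psi_j at Theta - Theta^ (the linear term vanishes by optimality of
   Theta^); the quadratic parts dominate the phi and psi differences
   directly and cocoercivity |grad f_i(x) - grad f_i(y)|^2 <= 2L D_{f_i}(x,y)
   dominates the gradient differences. *)
From HB Require Import structures.
From mathcomp Require Import all_boot all_order all_algebra.
From mathcomp Require Import all_classical all_reals all_analysis.
From mathcomp Require Import ring lra.
Import Order.TTheory GRing.Theory Num.Theory.
Import numFieldNormedType.Exports.
Local Open Scope ring_scope.
Set Implicit Arguments. Unset Strict Implicit. Unset Printing Implicit Defensive.

Section Euclid.
Variables (R : realType) (d : nat).
Implicit Types (u v w : 'rV[R]_d) (a : R).

Lemma sqnv_ge0 v : 0 <= sqnv v.
Proof. by apply: sumr_ge0 => l _; rewrite sqr_ge0. Qed.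

Lemma sqr_enorm v : enorm v ^+ 2 = sqnv v.
Proof. by rewrite /enorm sqr_sqrtr // sqnv_ge0. Qed.

Lemma dotvv v : dotv v v = sqnv v.
Proof. by apply: eq_bigr => l _; rewrite expr2. Qed.

Lemma sqnvD u v : sqnv (u + v) = sqnv u + 2 * dotv u v + sqnv v.
Proof.
rewrite /sqnv /dotv mulr_sumr -!big_split; apply: eq_bigr => l _ /=.
by rewrite !mxE; ring.
Qed.

Lemma sqnvB u v : sqnv (u - v) = sqnv u - 2 * dotv u v + sqnv v.
Proof.
rewrite /sqnv /dotv mulr_sumr -sumrB -big_split; apply: eq_bigr => l _ /=.
by rewrite !mxE; ring.
Qed.

Lemma sqnvZ a v : sqnv (a *: v) = a ^+ 2 * sqnv v.
Proof. by rewrite /sqnv mulr_sumr; apply: eq_bigr => l _; rewrite !mxE exprMn. Qed.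

Lemma sqnvN v : sqnv (- v) = sqnv v.
Proof. by apply: eq_bigr => l _; rewrite mxE sqrrN. Qed.

Lemma dotvDl u v w : dotv (v + w) u = dotv v u + dotv w u.
Proof. by rewrite /dotv -big_split; apply: eq_bigr => l _; rewrite !mxE mulrDl. Qed.

Lemma dotvBl u v w : dotv (v - w) u = dotv v u - dotv w u.
Proof. by rewrite /dotv -sumrB; apply: eq_bigr => l _; rewrite !mxE mulrBl. Qed.

Lemma dotvBr u v w : dotv u (v - w) = dotv u v - dotv u w.
Proof. by rewrite /dotv -sumrB; apply: eq_bigr => l _; rewrite !mxE mulrBr. Qed.

Lemma dotvZl a u v : dotv (a *: u) v = a * dotv u v.
Proof. by rewrite /dotv mulr_sumr; apply: eq_bigr => l _; rewrite !mxE; ring. Qed.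

Lemma dotvZr a u v : dotv u (a *: v) = a * dotv u v.
Proof. by rewrite /dotv mulr_sumr; apply: eq_bigr => l _; rewrite !mxE; ring. Qed.

Lemma dotvNr u v : dotv u (- v) = - dotv u v.
Proof. by rewrite /dotv -sumrN; apply: eq_bigr => l _; rewrite !mxE mulrN. Qed.

Lemma sqnvD_le u v : sqnv (u + v) <= 2 * sqnv u + 2 * sqnv v.
Proof. by have := sqnv_ge0 (u - v); rewrite sqnvB sqnvD; lra. Qed.

Lemma dotv_young a u v : 0 < a -> 2 * dotv u v <= a * sqnv u + a^-1 * sqnv v.
Proof.
move=> a0; have sa0 : Num.sqrt a != 0 by rewrite sqrtr_eq0 -ltNge.
have := sqnv_ge0 (Num.sqrt a *: u - (Num.sqrt a)^-1 *: v).
rewrite sqnvB !sqnvZ dotvZl dotvZr exprVn (sqr_sqrtr (ltW a0)).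
by rewrite [X in 2 * X]mulrA mulfV // mul1r; lra.
Qed.

End Euclid.

Lemma ler_add_divn (R : realType) (a b C : R) : 0 <= C ->
  (forall m : nat, (0 < m)%N -> a <= b + C / m%:R) -> a <= b.
Proof.
move=> C0 H; apply/ler_addgt0Pr => e e0.
have hb := archi_boundP (divr_ge0 C0 (ltW e0)).
apply: (le_trans (H (Num.bound (C / e)).+1 isT)); rewrite lerD2l.
rewrite ler_pdivrMr ?ltr0n // -ler_pdivrMl // mulrC.
by apply: (le_trans (ltW hb)); rewrite ler_nat.
Qed.

Lemma ge0_lin_quad (R : realType) (s C : R) :
  (forall t : R, 0 < t -> 0 <= t * s + t ^+ 2 * C) -> 0 <= s.
Proof.
move=> H; rewrite leNgt; apply/negP => s0.
have [C0|C0] := lerP C 0; first by have := H 1 ltr01; rewrite mul1r expr1n mul1r; lra.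
have t0 : 0 < - s / (2 * C) by rewrite divr_gt0 // ?oppr_gt0 // mulr_gt0.
have := H _ t0.
have -> : - s / (2 * C) * s + (- s / (2 * C)) ^+ 2 * C = - (s ^+ 2 / (4 * C)).
  by field; rewrite gt_eqF.
have s2 : 0 < s ^+ 2 by rewrite exprn_even_gt0 //= lt_eqF.
have : 0 < s ^+ 2 / (4 * C) by rewrite divr_gt0 // mulr_gt0.
lra.
Qed.

Lemma derive_quadratic (R : realType) (V : normedModType R) (g : V -> R) (v x : V) (a b : R) :
  (forall h : R, g (h *: v + x) = g x + h * a + h ^+ 2 * b) -> 'D_v g x = a.
Proof.
move=> gE; apply: cvg_lim => //.
have E : {near dnbhs (0:R), (fun h : R => a + h * b) =1
                            (fun h => h^-1 *: ((g \o shift x) (h *: v) - g x))}.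
  near=> h; have hN0 : h != 0 by near: h; exact: nbhs_dnbhs_neq.
  by rewrite /= gE /GRing.scale /=; field.
apply: cvg_trans (near_eq_cvg E) _; apply: cvg_within_filter.
have lim_ab : ((fun h : R => a + h * b) @ nbhs (0:R) --> a + 0 * b)%classic.
  by apply: cvgD; [exact: cvg_cst | apply: cvgM; [exact: cvg_id | exact: cvg_cst]].
by rewrite mul0r addr0 in lim_ab.
Unshelve. all: by end_near.
Qed.

Section SmoothConvex.
Variables (R : realType) (d : nat) (mu L : R) (f : 'rV[R]_d -> R).
Hypotheses (mu_ge0 : 0 <= mu) (L_gt0 : 0 < L).
Hypotheses (f_sc : strongly_convex mu f) (f_smooth : smooth L f).

Lemma smooth_sqnv x y : sqnv (gradv f x - gradv f y) <= L ^+ 2 * sqnv (x - y).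
Proof.
rewrite -!sqr_enorm -exprMn; apply: lerXn2r; rewrite ?nnegrE ?sqrtr_ge0 //.
by apply: le_trans (f_smooth x y); rewrite sqrtr_ge0.
Qed.

Lemma grad_increment_le (r : R) x D : 0 < r ->
  dotv (gradv f (x + r *: D) - gradv f x) D <= L * r * sqnv D.
Proof.
move=> r0; have Lr : 0 < (L * r)^-1 by rewrite invr_gt0 mulr_gt0.
have young := dotv_young (gradv f (x + r *: D) - gradv f x) D Lr.
have lip := smooth_sqnv (x + r *: D) x.
rewrite addrAC subrr add0r sqnvZ in lip.
have := ler_wpM2l (ltW Lr) lip.
have -> : (L * r)^-1 * (L ^+ 2 * (r ^+ 2 * sqnv D)) = L * r * sqnv D.
  by field; rewrite !gt_eqF.
by rewrite invrK in young; lra.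
Qed.

(* No integration: cut [x, y] into m steps, bound each step by convexity and
   the Lipschitz gradient, and let m grow. *)
Lemma descent x y :
  f y <= f x + dotv (gradv f x) (y - x) + L / 2 * sqnv (y - x).
Proof.
set D := y - x; have D_ge0 := sqnv_ge0 D.
apply: (@ler_add_divn _ _ _ (L / 2 * sqnv D)) => [|m m0].
  by rewrite mulr_ge0 // divr_ge0 // ltW.
set s : R := m%:R^-1; have s0 : 0 < s by rewrite invr_gt0 ltr0n.
have steps kk : f (x + (kk%:R * s) *: D) <= f x + kk%:R * s * dotv (gradv f x) D
    + L * s ^+ 2 * (kk%:R * (kk%:R + 1) / 2) * sqnv D.
  elim: kk => [|kk IH]; first by rewrite !mul0r scale0r addr0 mulr0 mul0r !addr0.
  set a := x + (kk%:R * s) *: D; set b := x + (kk.+1%:R * s) *: D.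
  have ab : a - b = - (s *: D).
    rewrite /a /b opprD addrACA subrr add0r -scalerBl -opprB -mulrBl.
    by rewrite -natrB // subSnn mul1r scaleNr.
  have conv := f_sc b a; rewrite ab dotvNr dotvZr sqnvN in conv.
  have inc := grad_increment_le x D (mulr_gt0 (ltr0Sn _ kk) s0).
  rewrite dotvBl -/b in inc.
  have : 0 <= mu / 2 * sqnv (s *: D) by rewrite mulr_ge0 ?sqnv_ge0 ?divr_ge0.
  have : s * dotv (gradv f b) D
         <= s * dotv (gradv f x) D + L * s ^+ 2 * kk.+1%:R * sqnv D.
    rewrite (_ : L * _ * _ * _ = s * (L * (kk.+1%:R * s) * sqnv D)); last by ring.
    by rewrite -mulrDr (ler_wpM2l (ltW s0)) //; lra.
  have -> : kk.+1%:R * s * dotv (gradv f x) D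
            = kk%:R * s * dotv (gradv f x) D + s * dotv (gradv f x) D.
    by rewrite -addn1 natrD; ring.
  have -> : L * s ^+ 2 * (kk.+1%:R * (kk.+1%:R + 1) / 2) * sqnv D
            = L * s ^+ 2 * (kk%:R * (kk%:R + 1) / 2) * sqnv D + L * s ^+ 2 * kk.+1%:R * sqnv D.
    by rewrite -addn1 natrD; field.
  by move: IH; rewrite -/a; lra.
have := steps m.
rewrite /s mulfV ?pnatr_eq0 -?lt0n // scale1r addrC subrK.
have -> : L * m%:R^-1 ^+ 2 * (m%:R * (m%:R + 1) / 2) * sqnv D
          = L / 2 * sqnv D + L / 2 * sqnv D / m%:R.
  by field; rewrite pnatr_eq0 -lt0n.
by rewrite mul1r; lra.
Qed.

Lemma cocoercive x y :
  sqnv (gradv f y - gradv f x) / (2 * L) <= f y - f x - dotv (gradv f x) (y - x).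
Proof.
set u := gradv f y - gradv f x; set w := y - L^-1 *: u.
have conv := f_sc x w; have desc := descent y w.
rewrite (_ : w - x = y - x - L^-1 *: u) ?dotvBr ?dotvZr in conv; last by rewrite addrAC.
rewrite (_ : w - y = - (L^-1 *: u)) ?dotvNr ?dotvZr ?sqnvN ?sqnvZ in desc;
  last by rewrite /w addrAC subrr add0r.
have quad_ge0 : 0 <= mu / 2 * sqnv (y - x - L^-1 *: u).
  by rewrite mulr_ge0 ?sqnv_ge0 ?divr_ge0.
have gradE : L^-1 * dotv (gradv f y) u - L^-1 * dotv (gradv f x) u = L^-1 * sqnv u.
  by rewrite -mulrBr -dotvBl dotvv.
have -> : sqnv u / (2 * L) = L^-1 * sqnv u / 2 by field; rewrite gt_eqF.
have E : L / 2 * (L^-1 ^+ 2 * sqnv u) = L^-1 * sqnv u / 2 by field; rewrite gt_eqF.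
by rewrite E in desc; rewrite dotvBr; lra.
Qed.

End SmoothConvex.

Lemma sum_partition (R : realType) n k (c : 'I_n -> 'I_k) (F : 'I_n -> 'I_k -> R) :
  \sum_(j < k) \sum_(i < n | c i == j) F i j = \sum_(i < n) F i (c i).
Proof.
rewrite (partition_big c (fun _ => true)) //=; apply: eq_bigr => j _.
by apply: eq_big => // i /eqP ->.
Qed.

Lemma wsum_dev_mean (R : realType) n (w x : 'I_n -> R) : \sum_i w i != 0 ->
  \sum_i w i * (x i - (\sum_i w i)^-1 * \sum_i w i * x i) = 0.
Proof.
move=> w_neq0; under eq_bigr do rewrite mulrBr.
by rewrite sumrB -mulr_suml mulrA mulfV // mul1r subrr.
Qed.

Section WeightedVariance.
Variables (R : realType) (n d : nat).
Implicit Types (X Y Z : 'M[R]_(n, d)) (w : 'I_n -> R).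

Lemma sum_dotv_dev_eq0 w (m : 'rV[R]_d) Y (v : 'rV[R]_d) :
  (forall l, \sum_i w i * (Y i l - m 0 l) = 0) ->
  \sum_i w i * dotv (row i Y - m) v = 0.
Proof.
move=> dev0.
transitivity (\sum_l v 0 l * \sum_i w i * (Y i l - m 0 l)).
  rewrite /dotv; under eq_bigr do rewrite mulr_sumr.
  rewrite exchange_big /=; apply: eq_bigr => l _; rewrite mulr_sumr.
  by apply: eq_bigr => i _; rewrite !mxE; ring.
by rewrite big1 // => l _; rewrite dev0 mulr0.
Qed.

Lemma row_delta_mxE (i i0 : 'I_n) l (h : R) Y :
  row i (h *: delta_mx i0 l + Y) = if i == i0 then h *: delta_mx 0 l + row i0 Y else row i Y.
Proof.
apply/rowP => l'; have [-> | ne_i] := eqVneq i i0; first by rewrite !mxE !eqxx.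
by rewrite !mxE (negbTE ne_i) mulr0 add0r.
Qed.

Lemma sum_dotv_row_delta w (A : 'I_n -> 'rV[R]_d) i0 l :
  \sum_i w i * dotv (A i) (row i (delta_mx i0 l)) = w i0 * A i0 0 l.
Proof.
rewrite (bigD1 i0) //= big1 => [|i /negbTE ne_i]; last first.
  by rewrite /dotv big1 ?mulr0 // => l' _; rewrite !mxE ne_i mulr0.
rewrite addr0 /dotv (bigD1 l) //= big1 => [|l' /negbTE ne_l]; last by rewrite !mxE ne_l eqxx mulr0.
by rewrite !mxE !eqxx mulr1 addr0.
Qed.

Variables (w : 'I_n -> R) (M : 'I_n -> 'M[R]_(n, d) -> 'rV[R]_d).

Definition wvar X : R := \sum_i w i * sqnv (row i X - M i X).

Hypothesis MB : forall i X Y, M i (X - Y) = M i X - M i Y.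
Hypothesis MZ : forall i (a : R) X, M i (a *: X) = a *: M i X.

Lemma wvar_split X Y :
  (forall Z, \sum_i w i * dotv (row i Y - M i Y) (M i Z) = 0) ->
  wvar X = wvar Y + 2 * \sum_i w i * dotv (row i Y - M i Y) (row i X - row i Y)
           + wvar (X - Y).
Proof.
move=> orthY.
have devE i : row i X - M i X = (row i Y - M i Y) + (row i (X - Y) - M i (X - Y)).
  by rewrite MB; apply/rowP => l; rewrite !mxE; ring.
rewrite /wvar mulr_sumr -!big_split /=.
transitivity (\sum_i (w i * sqnv (row i Y - M i Y)
    + 2 * (w i * dotv (row i Y - M i Y) (row i X - row i Y))
    + w i * sqnv (row i (X - Y) - M i (X - Y)))
  - 2 * \sum_i w i * dotv (row i Y - M i Y) (M i (X - Y))); last by rewrite orthY mulr0 subr0.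
rewrite mulr_sumr -sumrB; apply: eq_bigr => i _.
by rewrite devE sqnvD dotvBr linearB; ring.
Qed.

Lemma wvarZ (a : R) Z : wvar (a *: Z) = a ^+ 2 * wvar Z.
Proof.
rewrite /wvar mulr_sumr; apply: eq_bigr => i _.
by rewrite MZ linearZ -scalerBr sqnvZ mulrCA.
Qed.

Lemma derive_half_wvar Y i0 l :
  (forall Z, \sum_i w i * dotv (row i Y - M i Y) (M i Z) = 0) ->
  'D_(delta_mx i0 l) (fun X => 2^-1 * wvar X) Y = w i0 * (row i0 Y - M i0 Y) 0 l.
Proof.
move=> orthY.
apply: (@derive_quadratic _ _ _ _ _ _ (2^-1 * wvar (delta_mx i0 l))) => h.
rewrite (wvar_split (h *: delta_mx i0 l + Y) orthY) addrK wvarZ.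
under eq_bigr do rewrite linearD addrK linearZ dotvZr mulrCA.
by rewrite -mulr_sumr sum_dotv_row_delta; field.
Qed.

End WeightedVariance.

Lemma prod_two_supp (R : realType) (I : finType) (a b : I) (G : I -> R) : a != b ->
  (forall t, t != a -> t != b -> G t = 1) -> \prod_t G t = G a * G b.
Proof.
move=> ab G1; rewrite (bigD1 a) //= (bigD1 b) /=; last by rewrite eq_sym ab.
by rewrite big1 ?mulr1 // => t /andP [ta tb]; exact: G1.
Qed.

Section Sampling.
Variables (R : realType) (k : nat) (p0 : R) (p : 'I_k -> R).

Definition bern_mass (t : 'I_k.+1) (b : bool) : R :=
  match unlift ord0 t with
  | None => if b then p0 else 1 - p0
  | Some j => if b then p j else 1 - p j
  end.

Lemma xi_probE (xi : {ffun 'I_k.+1 -> bool}) : xi_prob p0 p xi = \prod_t bern_mass t (xi t).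
Proof.
rewrite /xi_prob big_ord_recl /bern_mass unlift_none; congr (_ * _).
by apply: eq_bigr => j _; rewrite liftK.
Qed.

Lemma xi_prob_pair (j : 'I_k) (b0 b1 : bool) :
  \sum_(xi : {ffun 'I_k.+1 -> bool})
     xi_prob p0 p xi * ((xi ord0 == b0) && (xi (lift ord0 j) == b1))%:R
  = bern_mass ord0 b0 * bern_mass (lift ord0 j) b1.
Proof.
set J := lift ord0 j; have J0 : ord0 != J by exact: neq_lift.
pose F (t : 'I_k.+1) (b : bool) := bern_mass t b *
   (if t == ord0 then (b == b0)%:R else if t == J then (b == b1)%:R else 1).
transitivity (\sum_(xi : {ffun 'I_k.+1 -> bool}) \prod_t F t (xi t)).
  apply: eq_bigr => xi _; rewrite xi_probE /F big_split /=; congr (_ * _).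
  rewrite (prod_two_supp J0); last by move=> t /negbTE -> /negbTE ->.
  by rewrite eqxx [J == ord0]eq_sym (negbTE J0) eqxx -natrM mulnb.
rewrite -(bigA_distr_bigA F) (prod_two_supp J0); last first.
  move=> t ta tb; rewrite big_bool /F (negbTE ta) (negbTE tb) !mulr1 /bern_mass.
  case: (unliftP ord0 t) => [j' _|tE]; first by rewrite /= addrC subrK.
  by rewrite tE eqxx in ta.
rewrite !big_bool /F eqxx [J == ord0]eq_sym (negbTE J0) eqxx /=.
by clear F; case: b0; case: b1; rewrite /= ?mulr1 ?mulr0 ?addr0 ?add0r.
Qed.

Lemma expect_xi_pair (j : 'I_k) (h : bool -> bool -> R) :
  \sum_(xi : {ffun 'I_k.+1 -> bool}) xi_prob p0 p xi * h (xi ord0) (xi (lift ord0 j))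
  = p0 * (p j * h true true + (1 - p j) * h true false)
    + (1 - p0) * (p j * h false true + (1 - p j) * h false false).
Proof.
have hE (xi : {ffun 'I_k.+1 -> bool}) : h (xi ord0) (xi (lift ord0 j)) =
    \sum_(b0 : bool) \sum_(b1 : bool)
       h b0 b1 * ((xi ord0 == b0) && (xi (lift ord0 j) == b1))%:R.
  rewrite !big_bool.
  by case: (xi ord0); case: (xi (lift ord0 j)); rewrite /= ?mulr1 ?mulr0 ?addr0 ?add0r.
transitivity (\sum_(b0 : bool) \sum_(b1 : bool)
    h b0 b1 * (bern_mass ord0 b0 * bern_mass (lift ord0 j) b1)); last first.
  by rewrite !big_bool /bern_mass unlift_none liftK /=; ring.
under eq_bigr do rewrite hE mulr_sumr; rewrite exchange_big /=; apply: eq_bigr => b0 _.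
under eq_bigr do rewrite mulr_sumr; rewrite exchange_big /=; apply: eq_bigr => b1 _.
by rewrite -xi_prob_pair mulr_sumr; apply: eq_bigr => xi _; ring.
Qed.

End Sampling.

(* With tau = p0 / D the server contribution 4 tau^2 / p0 and the cluster
   contribution 2 (1 - tau)^2 / ((1 - p0) pj) to the coefficient of |b|^2
   add up to exactly 4 / D. *)
Lemma oracle_row_young (R : realType) d (p0 pj tau D : R) (a a' b b' g g' : 'rV[R]_d) :
  0 < p0 < 1 -> 0 < pj < 1 -> D = p0 + 2 * (1 - p0) * pj -> tau = p0 / D ->
  p0 * sqnv (p0^-1 *: ((a + a') + tau *: (b + b')))
  + (1 - p0) * pj * sqnv (((1 - tau) / ((1 - p0) * pj)) *: (b + b'))
  + (1 - p0) * (1 - pj) * sqnv (((1 - p0) * (1 - pj))^-1 *: g)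
  <= 2 * (2 / p0 * sqnv a + 2 / D * sqnv b + (1 - p0)^-1 * (1 - pj)^-1 * sqnv (g - g'))
   + 2 * (2 / p0 * sqnv a' + 2 / D * sqnv b' + (1 - p0)^-1 * (1 - pj)^-1 * sqnv g').
Proof.
move=> /andP [p0_gt0 p0_lt1] /andP [pj_gt0 pj_lt1] DE tauE.
have q0 : 0 < 1 - p0 by rewrite subr_gt0.
have qj : 0 < 1 - pj by rewrite subr_gt0.
have D_gt0 : 0 < D by rewrite DE addr_gt0 // !mulr_gt0.
have server : sqnv ((a + a') + tau *: (b + b')) <=
    2 * (2 * sqnv a + 2 * (tau ^+ 2 * sqnv b)) + 2 * (2 * sqnv a' + 2 * (tau ^+ 2 * sqnv b')).
  rewrite scalerDr addrACA; apply: (le_trans (sqnvD_le _ _)).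
  have := sqnvD_le a (tau *: b); have := sqnvD_le a' (tau *: b'); rewrite !sqnvZ; lra.
have cluster := sqnvD_le b b'.
have local : sqnv g <= 2 * sqnv (g - g') + 2 * sqnv g'.
  by have := sqnvD_le (g - g') g'; rewrite subrK.
rewrite !sqnvZ; set cV := (1 - tau) / ((1 - p0) * pj).
have K1 : p0 * (p0^-1 ^+ 2 * sqnv (a + a' + tau *: (b + b'))) <= p0^-1 *
    (2 * (2 * sqnv a + 2 * (tau ^+ 2 * sqnv b)) + 2 * (2 * sqnv a' + 2 * (tau ^+ 2 * sqnv b'))).
  rewrite (_ : _ * (_ * _) = p0^-1 * sqnv (a + a' + tau *: (b + b'))); last first.
    by field; rewrite gt_eqF.
  by rewrite ler_wpM2l // invr_ge0 ltW.
have K2 : (1 - p0) * pj * (cV ^+ 2 * sqnv (b + b'))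
          <= ((1 - p0) * pj * cV ^+ 2) * (2 * sqnv b + 2 * sqnv b').
  rewrite mulrA ler_wpM2l //.
  by apply: mulr_ge0; [apply: mulr_ge0; apply: ltW | exact: sqr_ge0].
have K3 : (1 - p0) * (1 - pj) * (((1 - p0) * (1 - pj))^-1 ^+ 2 * sqnv g)
          <= ((1 - p0)^-1 * (1 - pj)^-1) * (2 * sqnv (g - g') + 2 * sqnv g').
  rewrite (_ : _ * (_ * sqnv g) = (1 - p0)^-1 * (1 - pj)^-1 * sqnv g); last first.
    by field; rewrite !gt_eqF.
  by rewrite ler_wpM2l // mulr_ge0 // invr_ge0 ltW.
have coefE : p0^-1 * (2 * (2 * sqnv a + 2 * (tau ^+ 2 * sqnv b))
                      + 2 * (2 * sqnv a' + 2 * (tau ^+ 2 * sqnv b')))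
   + ((1 - p0) * pj * cV ^+ 2) * (2 * sqnv b + 2 * sqnv b')
   + ((1 - p0)^-1 * (1 - pj)^-1) * (2 * sqnv (g - g') + 2 * sqnv g')
   = 2 * (2 / p0 * sqnv a + 2 / D * sqnv b + (1 - p0)^-1 * (1 - pj)^-1 * sqnv (g - g'))
   + 2 * (2 / p0 * sqnv a' + 2 / D * sqnv b' + (1 - p0)^-1 * (1 - pj)^-1 * sqnv g').
  by rewrite /cV tauE DE; field; rewrite -DE !gt_eqF ?mulr_gt0.
lra.
Qed.

Lemma entryB (R : realType) m d (A B : 'M[R]_(m, d)) i l : (A - B) i l = A i l - B i l.
Proof. by rewrite !mxE. Qed.

Lemma entryZ (R : realType) m d (a : R) (A : 'M[R]_(m, d)) i l : (a *: A) i l = a * A i l.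
Proof. by rewrite !mxE. Qed.

Section Clusters.
Variables (R : realType) (n k d : nat) (c : 'I_n -> 'I_k).
Variables (gamma : 'I_n -> R) (alpha : 'I_k -> R) (f : 'I_n -> 'rV[R]_d -> R).
Implicit Types (X Y Z : 'M[R]_(n, d)).

Local Notation gm := (gmean c gamma alpha).
Local Notation cm := (cmean c gamma).

(* Weights of client i in phi, in (1 - alpha_j) psi_j and in psi_j. *)
Definition gweight (i : 'I_n) : R := alpha (c i) * gamma i.
Definition lweight (i : 'I_n) : R := (1 - alpha (c i)) * gamma i.
Definition cweight (j : 'I_k) (i : 'I_n) : R := if c i == j then gamma i else 0.

Lemma gmean_coord X l : gm X 0 l = (\sum_i gweight i)^-1 * \sum_i gweight i * X i l.
Proof.
rewrite /gmean mxE summxE (sum_partition c (fun i j => alpha j * gamma i)).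
congr (_ * _); under eq_bigr do rewrite summxE.
rewrite -(sum_partition c (fun i j => alpha j * gamma i * X i l)).
by apply: eq_bigr => j _; apply: eq_bigr => i _; rewrite !mxE.
Qed.

Lemma cmean_coord X j l : cm X j 0 l = (\sum_i cweight j i)^-1 * \sum_i cweight j i * X i l.
Proof.
rewrite /cmean mxE summxE /cweight -big_mkcond /=; congr (_ * _).
rewrite big_mkcond /=; apply: eq_bigr => i _.
by case: ifP => _; rewrite ?mul0r // !mxE.
Qed.

Lemma gmeanB X Y : gm (X - Y) = gm X - gm Y.
Proof.
apply/rowP => l; rewrite [RHS]entryB !gmean_coord -mulrBr -sumrB; congr (_ * _).
by apply: eq_bigr => i _; rewrite !mxE; ring.
Qed.

Lemma gmeanZ (a : R) X : gm (a *: X) = a *: gm X.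
Proof.
apply/rowP => l; rewrite [RHS]entryZ !gmean_coord [RHS]mulrCA [in RHS]mulr_sumr; congr (_ * _).
by apply: eq_bigr => i _; rewrite !mxE; ring.
Qed.

Lemma cmeanB X Y j : cm (X - Y) j = cm X j - cm Y j.
Proof.
apply/rowP => l; rewrite [RHS]entryB !cmean_coord -mulrBr -sumrB; congr (_ * _).
by apply: eq_bigr => i _; rewrite !mxE; ring.
Qed.

Lemma cmeanZ (a : R) X j : cm (a *: X) j = a *: cm X j.
Proof.
apply/rowP => l; rewrite [RHS]entryZ !cmean_coord [RHS]mulrCA [in RHS]mulr_sumr; congr (_ * _).
by apply: eq_bigr => i _; rewrite !mxE; ring.
Qed.

Lemma phi_wvar X : phi c gamma alpha X = 2^-1 * wvar gweight (fun _ => gm) X.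
Proof.
rewrite /phi /wvar; congr (_ * _); under eq_bigr do rewrite mulr_sumr.
rewrite (sum_partition c (fun i j => alpha j * (gamma i * sqnv (row i X - gm X)))).
by apply: eq_bigr => i _; rewrite /gweight mulrA.
Qed.

Lemma psi_wvar j X : psi c gamma j X = 2^-1 * wvar (cweight j) (fun _ Y => cm Y j) X.
Proof.
rewrite /psi /wvar big_mkcond /=; congr (_ * _); apply: eq_bigr => i _.
by rewrite /cweight; case: ifP; rewrite ?mul0r.
Qed.

Lemma Fobj_wvar X : Fobj c gamma alpha f X = \sum_i f i (row i X)
    + 2^-1 * wvar lweight (fun i Y => cm Y (c i)) X + 2^-1 * wvar gweight (fun _ => gm) X.
Proof.
rewrite /Fobj /Fj (sum_partition c (fun i _ => f i (row i X))) phi_wvar; congr (_ + _ + _).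
rewrite /psi /wvar mulr_sumr -(sum_partition c
  (fun i j => 2^-1 * ((1 - alpha j) * gamma i * sqnv (row i X - cm X j)))).
by apply: eq_bigr => j _; rewrite !mulr_sumr; apply: eq_bigr => i _; ring.
Qed.

Definition dphi i X : 'rV[R]_d := gweight i *: (row i X - gm X).
Definition dpsi i X : 'rV[R]_d := lweight i *: (row i X - cm X (c i)).
Definition dFobj Y V : R :=
  \sum_i dotv (gradv (f i) (row i Y) + dphi i Y + dpsi i Y) (row i V).
Definition breg i X Y : R :=
  f i (row i X) - f i (row i Y) - dotv (gradv (f i) (row i Y)) (row i (X - Y)).

Lemma derive_Fj j Y i0 l : 'D_(delta_mx i0 l) (Fj c f j) Y
  = if c i0 == j then 'D_(delta_mx 0 l) (f i0) (row i0 Y) else 0.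
Proof.
have diffE (h : R) : Fj c f j (h *: delta_mx i0 l + Y) - Fj c f j Y =
    if c i0 == j then f i0 (h *: delta_mx 0 l + row i0 Y) - f i0 (row i0 Y) else 0.
  rewrite /Fj -sumrB big_mkcond /= (bigD1 i0) //= row_delta_mxE eqxx.
  rewrite big1 ?addr0 // => i /negbTE ne_i.
  by rewrite row_delta_mxE ne_i; case: ifP; rewrite ?subrr.
case: ifP => ci0 /=; last first.
  apply: (@derive_quadratic _ _ _ _ _ _ 0) => h.
  by move/eqP: (diffE h); rewrite ci0 subr_eq0 => /eqP ->; rewrite !mulr0 !addr0.
rewrite /derive (_ : (fun h : R => _) =
    (fun h => h^-1 *: ((f i0 \o shift (row i0 Y)) (h *: delta_mx 0 l) - f i0 (row i0 Y)))) //.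
by apply: funext => h /=; rewrite diffE ci0.
Qed.

Lemma grad_Fj j Y i l :
  gradM (Fj c f j) Y i l = if c i == j then gradv (f i) (row i Y) 0 l else 0.
Proof. by rewrite /gradM /gradv !mxE derive_Fj. Qed.

Lemma sum_sqnM_cluster (a : 'I_k -> R) (G : 'I_k -> 'M[R]_(n, d)) (g : 'I_n -> 'rV[R]_d) :
  (forall j i l, G j i l = if c i == j then g i 0 l else 0) ->
  \sum_j a j * sqnM (G j) = \sum_i a (c i) * sqnv (g i).
Proof.
move=> GE; under eq_bigr do rewrite /sqnM mulr_sumr.
rewrite exchange_big /=; apply: eq_bigr => i _.
rewrite (bigD1 (c i)) //= [X in _ + X]big1 => [|j /negbTE ne_j]; last first.
  by rewrite big1 ?mulr0 // => l _; rewrite GE eq_sym ne_j expr0n.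
by rewrite addr0; congr (_ * _); apply: eq_bigr => l _; rewrite GE eqxx.
Qed.

Lemma dphiB i X Y : dphi i X = dphi i (X - Y) + dphi i Y.
Proof. by apply/rowP => l; rewrite /dphi gmeanB linearB !mxE; ring. Qed.

Lemma dpsiB i X Y : dpsi i X = dpsi i (X - Y) + dpsi i Y.
Proof. by apply/rowP => l; rewrite /dpsi cmeanB linearB !mxE; ring. Qed.

Section PositiveWeights.
Hypothesis gweight_neq0 : \sum_i gweight i != 0.
Hypothesis cweight_neq0 : forall j, \sum_i cweight j i != 0.

Lemma gmean_orth Y Z : \sum_i gweight i * dotv (row i Y - gm Y) (gm Z) = 0.
Proof. by apply: sum_dotv_dev_eq0 => l; rewrite gmean_coord wsum_dev_mean. Qed.

Lemma cmean_orth j Y (v : 'rV[R]_d) : \sum_i cweight j i * dotv (row i Y - cm Y j) v = 0.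
Proof. by apply: sum_dotv_dev_eq0 => l; rewrite cmean_coord wsum_dev_mean. Qed.

Lemma lmean_orth Y Z : \sum_i lweight i * dotv (row i Y - cm Y (c i)) (cm Z (c i)) = 0.
Proof.
rewrite -(sum_partition c (fun i j => (1 - alpha j) * gamma i * dotv (row i Y - cm Y j) (cm Z j))).
rewrite big1 // => j _.
transitivity ((1 - alpha j) * \sum_i cweight j i * dotv (row i Y - cm Y j) (cm Z j)).
  rewrite mulr_sumr big_mkcond /=; apply: eq_bigr => i _; rewrite /cweight.
  by case: ifP => _; [ring | rewrite !mul0r mulr0].
by rewrite cmean_orth mulr0.
Qed.

Lemma Fobj_expand X Y :
  Fobj c gamma alpha f X - Fobj c gamma alpha f Y = \sum_i breg i X Y + dFobj Y (X - Y)
    + 2^-1 * wvar lweight (fun i Z => cm Z (c i)) (X - Y)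
    + 2^-1 * wvar gweight (fun _ => gm) (X - Y).
Proof.
rewrite !Fobj_wvar (@wvar_split _ _ _ lweight (fun i Z => cm Z (c i)) (fun i X Y => cmeanB X Y (c i))
  X Y (lmean_orth Y)) (@wvar_split _ _ _ gweight (fun _ => gm) (fun _ => gmeanB) X Y
  (gmean_orth Y)).
have -> : dFobj Y (X - Y) = \sum_i dotv (gradv (f i) (row i Y)) (row i (X - Y))
    + \sum_i gweight i * dotv (row i Y - gm Y) (row i X - row i Y)
    + \sum_i lweight i * dotv (row i Y - cm Y (c i)) (row i X - row i Y).
  rewrite /dFobj -!big_split; apply: eq_bigr => i _.
  by rewrite 2!dotvDl /dphi /dpsi !dotvZl linearB.
have -> : \sum_i breg i X Y = \sum_i f i (row i X) - \sum_i f i (row i Y)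
    - \sum_i dotv (gradv (f i) (row i Y)) (row i (X - Y)) by rewrite -!sumrB.
by field.
Qed.

Lemma dFobjZ Y V (t : R) : dFobj Y (t *: V) = t * dFobj Y V.
Proof. by rewrite /dFobj mulr_sumr; apply: eq_bigr => i _; rewrite linearZ dotvZr. Qed.

(* At a minimizer Y, 0 <= F(Y + t W) - F(Y) <= t dF(W) + O(t^2) by the
   descent lemma, so dF(W) >= 0 for every W. *)
Lemma dFobj_min_eq0 (mu L : R) Y V :
  0 <= mu -> 0 < L -> (forall i, strongly_convex mu (f i)) -> (forall i, smooth L (f i)) ->
  (forall X, Fobj c gamma alpha f Y <= Fobj c gamma alpha f X) -> dFobj Y V = 0.
Proof.
move=> mu0 L0 f_sc f_sm Ymin.
suff dF_ge0 W : 0 <= dFobj Y W.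
  apply/eqP; rewrite eq_le dF_ge0 andbT -oppr_ge0 -mulN1r -dFobjZ scaleN1r; exact: dF_ge0.
apply: (@ge0_lin_quad _ _ (\sum_i L / 2 * sqnv (row i W)
   + 2^-1 * wvar lweight (fun i Z => cm Z (c i)) W
   + 2^-1 * wvar gweight (fun _ => gm) W)) => t t0.
have := Ymin (t *: W + Y); rewrite -subr_ge0 Fobj_expand addrK dFobjZ.
rewrite !wvarZ; [|by move=> *; rewrite gmeanZ|by move=> *; rewrite cmeanZ].
move=> /le_trans; apply.
have breg_le : \sum_i breg i (t *: W + Y) Y <= t ^+ 2 * \sum_i L / 2 * sqnv (row i W).
  rewrite mulr_sumr; apply: ler_sum => i _; rewrite /breg.
  have := descent mu0 L0 (f_sc i) (f_sm i) (row i Y) (row i (t *: W + Y)).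
  by rewrite addrK !linearD !linearZ addrK sqnvZ /=; lra.
rewrite !mulrDr; lra.
Qed.

Lemma grad_phi Y i l : gradM (phi c gamma alpha) Y i l = dphi i Y 0 l.
Proof.
rewrite /gradM mxE (_ : phi c gamma alpha = fun X => 2^-1 * wvar gweight (fun _ => gm) X).
  by rewrite (derive_half_wvar (fun _ => gmeanB) (fun _ => gmeanZ) i l (gmean_orth Y)) entryZ.
by apply: funext => X; rewrite phi_wvar.
Qed.

Lemma grad_psi j Y i l :
  gradM (psi c gamma j) Y i l = if c i == j then (gamma i *: (row i Y - cm Y j)) 0 l else 0.
Proof.
rewrite /gradM mxE (_ : psi c gamma j = fun X => 2^-1 * wvar (cweight j) (fun _ Y => cm Y j) X).
  rewrite (derive_half_wvar (fun _ X Y => cmeanB X Y j) (fun _ a X => cmeanZ a X j) i l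
    (fun Z => cmean_orth j Y (cm Z j))) entryZ /cweight.
  by case: ifP; rewrite ?mul0r.
by apply: funext => X; rewrite psi_wvar.
Qed.

Definition sigma2_client (p0 : R) (p : 'I_k -> R) Y i : R :=
  2 / p0 * sqnv (dphi i Y) + 2 / (p0 + 2 * (1 - p0) * p (c i)) * sqnv (dpsi i Y)
  + (1 - p0)^-1 * (1 - p (c i))^-1 * sqnv (gradv (f i) (row i Y)).

Lemma sigma2E p0 p Y : sigma2 c gamma alpha f p0 p Y = \sum_i sigma2_client p0 p Y i.
Proof.
rewrite /sigma2 (sum_sqnM_cluster _ (g := fun i => gamma i *: (row i Y - cm Y (c i)))); last first.
  by move=> j i l; rewrite grad_psi; case: eqP => [<-|].
rewrite (sum_sqnM_cluster _ (g := fun i => gradv (f i) (row i Y))); last first.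
  by move=> j i l; rewrite grad_Fj.
have -> : sqnM (gradM (phi c gamma alpha) Y) = \sum_i sqnv (dphi i Y).
  by apply: eq_bigr => i _; apply: eq_bigr => l _; rewrite grad_phi.
rewrite !big_split /= !mulr_sumr; congr (_ + _ + _); apply: eq_bigr => i _.
- by rewrite /dpsi /lweight -scalerA !sqnvZ; ring.
- by rewrite mulrA.
Qed.

Definition Fgap_client X Y i : R :=
  breg i X Y + 2^-1 * (lweight i * sqnv (row i (X - Y) - cm (X - Y) (c i)))
             + 2^-1 * (gweight i * sqnv (row i (X - Y) - gm (X - Y))).

Lemma Fobj_gap (mu L : R) X Y :
  0 <= mu -> 0 < L -> (forall i, strongly_convex mu (f i)) -> (forall i, smooth L (f i)) ->
  (forall Z, Fobj c gamma alpha f Y <= Fobj c gamma alpha f Z) ->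
  Fobj c gamma alpha f X - Fobj c gamma alpha f Y = \sum_i Fgap_client X Y i.
Proof.
move=> mu0 L0 f_sc f_sm Ymin.
rewrite Fobj_expand (dFobj_min_eq0 _ mu0 L0 f_sc f_sm Ymin) addr0 /wvar !mulr_sumr.
by rewrite -!big_split.
Qed.

End PositiveWeights.

Lemma gweight_sum_neq0 :
  (forall i, 0 < gamma i) -> (forall j, 0 <= alpha j <= 1) ->
  (forall j, exists i, c i = j) -> (exists j, alpha j != 0) -> \sum_i gweight i != 0.
Proof.
move=> gamma_gt0 alpha_01 c_onto [j alpha_j]; have [i0 ci0] := c_onto j.
have gw_ge0 i : 0 <= gweight i by case/andP: (alpha_01 (c i)) => a0 _; rewrite mulr_ge0 // ltW.
have gw_i0 : 0 < gweight i0.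
  by case/andP: (alpha_01 j) => a0 _; rewrite /gweight ci0 mulr_gt0 // lt_def alpha_j.
rewrite lt0r_neq0 // (bigD1 i0) //=; apply: (lt_le_trans gw_i0).
by rewrite lerDl sumr_ge0.
Qed.

Lemma cweight_sum_neq0 :
  (forall i, 0 < gamma i) -> (forall j, exists i, c i = j) -> forall j, \sum_i cweight j i != 0.
Proof.
move=> gamma_gt0 c_onto j; have [i0 ci0] := c_onto j.
rewrite lt0r_neq0 // (bigD1 i0) //= /cweight ci0 eqxx; apply: (lt_le_trans (gamma_gt0 i0)).
by rewrite lerDl sumr_ge0 // => i _; case: ifP => // _; exact: ltW.
Qed.

Definition EsqG_client (p0 : R) (p tau : 'I_k -> R) X i : R :=
  p0 * sqnv (p0^-1 *: (dphi i X + tau (c i) *: dpsi i X))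
  + (1 - p0) * p (c i) * sqnv (((1 - tau (c i)) / ((1 - p0) * p (c i))) *: dpsi i X)
  + (1 - p0) * (1 - p (c i)) * sqnv (((1 - p0) * (1 - p (c i)))^-1 *: gradv (f i) (row i X)).

Lemma EsqGE p0 p tau X : EsqG c gamma alpha f p0 p tau X = \sum_i EsqG_client p0 p tau X i.
Proof.
rewrite /EsqG; under eq_bigr do rewrite /sqnM mulr_sumr.
rewrite exchange_big /=; apply: eq_bigr => i _.
pose h b0 b1 := sqnv (if b0 then p0^-1 *: (dphi i X + tau (c i) *: dpsi i X)
   else if b1 then ((1 - tau (c i)) / ((1 - p0) * p (c i))) *: dpsi i X
   else ((1 - p0) * (1 - p (c i)))^-1 *: gradv (f i) (row i X)).
transitivity (\sum_(xi : {ffun 'I_k.+1 -> bool})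
                xi_prob p0 p xi * h (xi ord0) (xi (lift ord0 (c i)))); last first.
  by rewrite expect_xi_pair /h /EsqG_client; ring.
apply: eq_bigr => xi _; congr (_ * _); apply: eq_bigr => l _; rewrite mxE /=.
rewrite /dphi /dpsi /gweight /lweight; move: (gm X) (cm X (c i)) => g m.
by case: (xi ord0); last case: (xi (lift ord0 (c i))); rewrite /= !mxE; ring.
Qed.

Lemma scrL_ge_gweight (L p0 : R) (p : 'I_k -> R) i : 0 < p0 ->
  2 / p0 * gweight i <= scrL c gamma alpha L p0 p.
Proof.
move=> p0_gt0; rewrite /scrL le_max; apply/orP; left.
apply: ler_wpM2l; first by rewrite divr_ge0 // ltW.
apply: le_trans (le_bigmax 0 _ (c i)).
exact: (le_bigmax_cond 0 (fun i' => alpha (c i) * gamma i') (eqxx (c i))).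
Qed.

Lemma scrL_ge_lweight (L p0 : R) (p : 'I_k -> R) i :
  0 < p0 < 1 -> (forall j, 0 < p j < 1) -> (forall j, 0 <= alpha j <= 1) ->
  2 * lweight i / (p0 + 2 * (1 - p0) * p (c i)) <= scrL c gamma alpha L p0 p.
Proof.
move=> /andP [p0_gt0 p0_lt1] p_01 alpha_01.
have /andP [pj_gt0 pj_lt1] := p_01 (c i); have /andP [a0 a1] := alpha_01 (c i).
have D_gt0 : 0 < p0 + 2 * (1 - p0) * p (c i) by rewrite addr_gt0 // !mulr_gt0 ?subr_gt0.
rewrite /scrL !le_max; apply/orP; right; apply/orP; left.
apply: le_trans (le_bigmax 0 _ (c i)).
rewrite /lweight !mulrA; apply: ler_wpM2r; first by rewrite invr_ge0 ltW.
apply: ler_wpM2l; first by rewrite mulr_ge0 // subr_ge0.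
exact: (le_bigmax_cond 0 gamma (eqxx (c i))).
Qed.

Lemma scrL_ge_local (L p0 : R) (p : 'I_k -> R) j : 0 <= L -> 0 < p0 < 1 ->
  L * ((1 - p0)^-1 * (1 - p j)^-1) <= scrL c gamma alpha L p0 p.
Proof.
move=> L_ge0 /andP [p0_gt0 p0_lt1].
rewrite /scrL !le_max; apply/orP; right; apply/orP; right.
rewrite mulrA; apply: ler_wpM2l; first by rewrite divr_ge0 // subr_ge0 ltW.
exact: (le_bigmax 0 (fun j => (1 - p j)^-1) j).
Qed.

Lemma client_bound (mu L p0 : R) (p tau : 'I_k -> R) X Y i :
  0 <= mu -> 0 < L -> strongly_convex mu (f i) -> smooth L (f i) ->
  0 < p0 < 1 -> (forall j, 0 < p j < 1) ->
  (forall j, tau j = p0 / (p0 + 2 * (1 - p0) * p j)) ->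
  (forall i, 0 < gamma i) -> (forall j, 0 <= alpha j <= 1) ->
  EsqG_client p0 p tau X i
    <= 4 * scrL c gamma alpha L p0 p * Fgap_client X Y i + 2 * sigma2_client p0 p Y i.
Proof.
move=> mu0 L0 f_sc f_sm p0_01 p_01 tauE gamma_gt0 alpha_01.
have /andP [p0_gt0 p0_lt1] := p0_01; have /andP [pj_gt0 pj_lt1] := p_01 (c i).
have /andP [a0 a1] := alpha_01 (c i).
have gw_ge0 : 0 <= gweight i by rewrite mulr_ge0 // ltW.
have lw_ge0 : 0 <= lweight i by rewrite mulr_ge0 ?subr_ge0 // ltW.
rewrite /EsqG_client (dphiB i X Y) (dpsiB i X Y).
apply: (le_trans (oracle_row_young _ _ _ _ _ (gradv (f i) (row i Y))
  p0_01 (p_01 (c i)) erefl (tauE (c i)))).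
rewrite /sigma2_client /Fgap_client; set S := scrL c gamma alpha L p0 p.
set sg := sqnv (row i (X - Y) - gm (X - Y)).
set sc := sqnv (row i (X - Y) - cm (X - Y) (c i)).
have coco := cocoercive mu0 L0 f_sc f_sm (row i Y) (row i X).
rewrite -linearB -/(breg i X Y) in coco.
have breg_ge0 : 0 <= breg i X Y.
  by apply: le_trans coco; rewrite divr_ge0 ?sqnv_ge0 // mulr_ge0 // ltW.
have phi_part : 2 / p0 * sqnv (dphi i (X - Y)) <= S * (gweight i * sg).
  rewrite /dphi sqnvZ -/sg.
  rewrite (_ : 2 / p0 * (gweight i ^+ 2 * sg) = 2 / p0 * gweight i * (gweight i * sg)).
    by apply: ler_wpM2r; [rewrite mulr_ge0 ?sqnv_ge0 | exact: scrL_ge_gweight].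
  by rewrite expr2 !mulrA.
have psi_part :
    2 / (p0 + 2 * (1 - p0) * p (c i)) * sqnv (dpsi i (X - Y)) <= S * (lweight i * sc).
  rewrite /dpsi sqnvZ -/sc.
  rewrite (_ : 2 / _ * (lweight i ^+ 2 * sc)
               = 2 * lweight i / (p0 + 2 * (1 - p0) * p (c i)) * (lweight i * sc)).
    by apply: ler_wpM2r; [rewrite mulr_ge0 ?sqnv_ge0 | exact: scrL_ge_lweight].
  by field; rewrite gt_eqF // addr_gt0 // !mulr_gt0 // subr_gt0.
have local_part : (1 - p0)^-1 / (1 - p (c i))
    * sqnv (gradv (f i) (row i X) - gradv (f i) (row i Y)) <= 2 * S * breg i X Y.
  have q_ge0 : 0 <= (1 - p0)^-1 / (1 - p (c i)).
    by rewrite mulr_ge0 // invr_ge0 subr_ge0 ltW.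
  have coco' : sqnv (gradv (f i) (row i X) - gradv (f i) (row i Y)) <= 2 * L * breg i X Y.
    by move: coco; rewrite ler_pdivrMr ?mulr_gt0 // mulrC.
  apply: le_trans (ler_wpM2l q_ge0 coco') _.
  rewrite (_ : _ * (2 * L * _) = 2 * (L * ((1 - p0)^-1 * (1 - p (c i))^-1)) * breg i X Y).
    by rewrite ler_wpM2r // ler_wpM2l // scrL_ge_local // ltW.
  by rewrite mulrCA !mulrA.
nra.
Qed.

End Clusters.

Unset Implicit Arguments.
Set Strict Implicit.

Theorem mainTheorem7 (R : realType) (n k d : nat) (c : 'I_n -> 'I_k)
  (gamma : 'I_n -> R) (alpha : 'I_k -> R) (mu L : R)
  (f : 'I_n -> 'rV[R]_d -> R) (p0 : R) (p tau : 'I_k -> R)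
  (Thh Th : 'M[R]_(n, d)) :
  (0 < d)%N ->
  (forall j : 'I_k, exists i : 'I_n, c i = j) ->
  (forall i, 0 < gamma i) ->
  (forall j, 0 <= alpha j <= 1) ->
  (exists j, alpha j != 0) ->
  0 < mu -> mu <= L ->
  (forall i x, differentiable (f i) x) ->
  (forall i, strongly_convex mu (f i)) ->
  (forall i, smooth L (f i)) ->
  (forall Th', Fobj c gamma alpha f Thh <= Fobj c gamma alpha f Th') ->
  0 < p0 < 1 ->
  (forall j, 0 < p j < 1) ->
  (forall j, tau j = p0 / (p0 + 2 * (1 - p0) * p j)) ->
  EsqG c gamma alpha f p0 p tau Th
    <= 4 * scrL c gamma alpha L p0 p * (Fobj c gamma alpha f Th - Fobj c gamma alpha f Thh)
       + 2 * sigma2 c gamma alpha f p0 p Thh.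
Proof.
move=> _ c_onto gamma_gt0 alpha_01 alpha_neq0 mu_gt0 muL _ f_sc f_sm Thh_min p0_01 p_01 tauE.
have L_gt0 : 0 < L := lt_le_trans mu_gt0 muL.
have gw_neq0 := gweight_sum_neq0 gamma_gt0 alpha_01 c_onto alpha_neq0.
have cw_neq0 := cweight_sum_neq0 gamma_gt0 c_onto.
rewrite EsqGE (sigma2E _ gw_neq0 cw_neq0).
rewrite (Fobj_gap gw_neq0 cw_neq0 Th (ltW mu_gt0) L_gt0 f_sc f_sm Thh_min).
rewrite !mulr_sumr -big_split; apply: ler_sum => i _.
exact: client_bound (ltW mu_gt0) L_gt0 (f_sc i) (f_sm i) p0_01 p_01 tauE gamma_gt0 alpha_01.
Qed.
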